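(* Let $d_n(a,b,x)$ be defined by $d_1=1$ and $d_n=d_{n-1}x+\sum_{k=2}^{n-1}d_{n-k}\,a\,d_k\,b$ for $n\ge2$, where $a,b,x$ are non-commuting indeterminates. Consider lattice walks in $\mathbb{Z}^2$ using horizontal steps $(i,j)\to(i+1,j)$ (weight $a$), vertical steps $(i,j)\to(i,j+1)$ (weight $b$) and diagonal steps $(i,j)\to(i+1,j+1)$ (weight $x$), where the weight of a walk is the non-commutative product of the weights of its steps in order. Then: (i) $d_n(a,b,x)$ equals the sum of the weights of all such walks from $(0,0)$ to $(n-1,n-1)$ that stay in the region $i\ge j$ and never contain a horizontal step immediately followed by a vertical step; (ii) $a\,d_n(a,b,x)\,b$ equals the sum of the weights of all such walks (with the same step restriction) from $(0,0)$ to $(n,n)$ that, apart from their two endpoints, stay strictly in the region $i>j$; (iii) consequently $d_n(a,b,x)$ is a sum of distinct monomials, each with coefficient $1$, and the number of these monomials is the Catalan number $C_{n-1}=\frac{1}{n}\binom{2n-2}{n-1}$. *)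

(* Non-commutative polynomials with natural-number
   coefficients in the letters a, b, x are modelled as finite multisets
   of words, i.e. as lists of words up to permutation (perm_eq);
   the coefficient of a word w in p is count_mem w p. *)
From HB Require Import structures.
From mathcomp Require Import all_boot.
Set Implicit Arguments. Unset Strict Implicit. Unset Printing Implicit Defensive.

(* The three letters / step types: La = horizontal step (weight a),
   Lb = vertical step (weight b), Lx = diagonal step (weight x). *)
Inductive letter := La | Lb | Lx.

Definition letter_eqb (u v : letter) : bool :=
  match u, v with
  | La, La | Lb, Lb | Lx, Lx => true
  | _, _ => false
  end.

Lemma letter_eqP : Equality.axiom letter_eqb.
Proof. by case; case; constructor. Qed.

HB.instance Definition _ := hasDecEq.Build letter letter_eqP.

Definition word := seq letter.

Definition ncpoly := seq word.

Definition mono (w : word) : ncpoly := [:: w].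

Definition padd (p q : ncpoly) : ncpoly := p ++ q.
Definition pmul (p q : ncpoly) : ncpoly := [seq u ++ v | u <- p, v <- q].

Definition coef (p : ncpoly) (w : word) : nat := count_mem w p.

Definition peq (p q : ncpoly) : Prop := forall w, coef p w = coef q w.

Definition nmonos (p : ncpoly) : nat := size (undup p).

(* Lattice walks: a walk from (0,0) is its sequence of steps; its weight is
   the word of the weights of the steps, which is the same sequence. *)
Definition step (l : letter) : nat * nat :=
  match l with La => (1, 0) | Lb => (0, 1) | Lx => (1, 1) end.

Definition pos (w : word) : nat * nat :=
  foldr (fun l p => ((step l).1 + p.1, (step l).2 + p.2)) (0, 0) w.

Definition no_ab (w : word) : bool := ~~ infix [:: La; Lb] w.

Definition walk_i (n : nat) (w : word) : bool :=
  [&& pos w == (n.-1, n.-1),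
      all (fun k => (pos (take k w)).2 <= (pos (take k w)).1) (iota 0 (size w).+1)
    & no_ab w].

Definition walk_ii (n : nat) (w : word) : bool :=
  [&& pos w == (n, n),
      all (fun k => (pos (take k w)).2 < (pos (take k w)).1) (iota 1 (size w).-1)
    & no_ab w].

(* Sum of the weights of the walks w satisfying P, as a polynomial given by its
   coefficients: each walk contributes its weight with coefficient 1 and
   distinct walks have distinct step sequences, so the coefficient of w is
   1 if w is such a walk, 0 otherwise. *)
Definition walksum_coef (P : word -> bool) (w : word) : nat := P w.

Definition d_rec (d : nat -> ncpoly) (n : nat) : ncpoly :=
  padd (pmul (d n.-1) (mono [:: Lx]))
       (flatten [seq pmul (pmul (pmul (d (n - k)) (mono [:: La])) (d k)) (mono [:: Lb])
                | k <- iota 2 (n - 2)]).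

(* Call a walk admissible if it ends on the diagonal, never
   goes above it and never takes a step a immediately followed by b.  The
   heart of the proof is the last-return decomposition: an admissible walk
   ending with b factors uniquely as U a V b, where U and V are admissible
   and V is nonempty (the arch a V b is the part after the last visit to the
   diagonal), while one ending with x is an admissible walk followed by x and
   none ends with a.  This is exactly the recurrence defining d_n, so by
   strong induction the coefficient of w in d_n is 1 when w is admissible
   and ends at (n-1, n-1), and 0 otherwise: this is (i).  Part (ii) follows
   because the walks of (ii) are precisely a v b with v as in (i).  For
   (iii), the coefficients are 0/1 by (i), and the number of terms satisfies
   the Catalan recurrence, which we solve through the ballot-number table. *)

From HB Require Import structures.
From mathcomp Require Import all_boot.
From mathcomp Require Import zify.
Set Implicit Arguments. Unset Strict Implicit. Unset Printing Implicit Defensive.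

Notation xc w := (pos w).1.
Notation yc w := (pos w).2.

Lemma xc_cat u v : xc (u ++ v) = xc u + xc v.
Proof. by elim: u => [|l u IH] //=; rewrite IH addnA. Qed.

Lemma yc_cat u v : yc (u ++ v) = yc u + yc v.
Proof. by elim: u => [|l u IH] //=; rewrite IH addnA. Qed.

Lemma xc_rcons u l : xc (rcons u l) = xc u + (step l).1.
Proof. by rewrite -cats1 xc_cat /= addn0. Qed.

Lemma yc_rcons u l : yc (rcons u l) = yc u + (step l).2.
Proof. by rewrite -cats1 yc_cat /= addn0. Qed.

(* Every step moves by at least one unit, so a walk is no longer than its
   endpoint's coordinate sum. *)
Lemma size_le_xc_yc w : size w <= xc w + yc w.
Proof. by elim: w => [|[] w IH] //=; lia. Qed.

Lemma no_ab_cons l t :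
  no_ab (l :: t) = ~~ ((l == La) && (head Lx t == Lb)) && no_ab t.
Proof.
rewrite /no_ab infix_consl negb_or; congr (_ && _).
by case: l; case: t => [|[] t] /=; rewrite ?andbT //; case: t.
Qed.

Lemma no_ab_cat u v : no_ab (u ++ v) =
  [&& no_ab u, no_ab v & ~~ ((last Lx u == La) && (head Lx v == Lb))].
Proof.
elim: u => [|l u IH]; first by rewrite /= andbT.
rewrite cat_cons no_ab_cons IH no_ab_cons.
case: u IH => [|l' u] IH /=; last by rewrite !andbA.
by case: l; case: (head Lx v); case: (no_ab v).
Qed.

Definition below_diag (w : word) : bool :=
  all (fun k => yc (take k w) <= xc (take k w)) (iota 0 (size w).+1).

Lemma below_diagP w :
  reflect (forall k, yc (take k w) <= xc (take k w)) (below_diag w).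
Proof.
apply: (iffP allP) => [H k|H k _]; last exact: H.
case: (leqP k (size w)) => hk; first by apply: H; rewrite mem_iota; lia.
rewrite take_oversize; last by lia.
by have := H (size w); rewrite take_size; apply; rewrite mem_iota; lia.
Qed.

Lemma below_diag_catP u v : reflect
  (below_diag u /\ forall k, yc u + yc (take k v) <= xc u + xc (take k v))
  (below_diag (u ++ v)).
Proof.
apply: (iffP (below_diagP _)) => [H|[/below_diagP Hu Hv] k].
  split=> [|k]; last by have := H (size u + k); rewrite take_cat
    ltnNge leq_addr /= addKn xc_cat yc_cat.
  apply/below_diagP => k; case: (leqP k (size u)) => hk.
    by have := H k; rewrite takel_cat.
  by have := H (size u); rewrite takel_cat // take_size take_oversize //; lia.
by rewrite take_cat; case: ifP => _; rewrite ?xc_cat ?yc_cat.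
Qed.

Lemma below_diag_rcons w l :
  below_diag (rcons w l) = below_diag w && (yc w + (step l).2 <= xc w + (step l).1).
Proof.
rewrite -cats1; apply/below_diag_catP/andP => -[h H]; split => //.
  by have := H 1; rewrite /= !addn0.
case=> [|k] /=; rewrite ?addn0 //.
by move/below_diagP: h => /(_ (size w)); rewrite take_size.
Qed.

Lemma below_diag_end v : below_diag v -> yc v <= xc v.
Proof. by move/below_diagP => /(_ (size v)); rewrite take_size. Qed.

Lemma below_diag_head v : below_diag v -> head Lx v != Lb.
Proof. by case: v => [|l v] // /below_diagP /(_ 1); rewrite /= take0; case: l. Qed.

Lemma below_diag_last v : below_diag v -> xc v = yc v -> last Lx v != La.
Proof.
case/lastP: v => [|v l] //; rewrite last_rcons below_diag_rcons xc_rcons yc_rcons.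
by case/andP=> /below_diag_end; case: l => //=; lia.
Qed.

Lemma pmul_mono_r p y : pmul p (mono y) = map (cat^~ y) p.
Proof. by elim: p => //= u p IH; rewrite -IH. Qed.

Lemma pmul_mono_l y q : pmul (mono y) q = map (cat y) q.
Proof. by rewrite /pmul /= cats0. Qed.

Lemma count_map_cat (u w : word) (q : ncpoly) :
  count_mem w (map (cat u) q) = (take (size u) w == u) * count_mem (drop (size u) w) q.
Proof.
rewrite count_map; case: eqP => [e|ne].
  rewrite mul1n; apply: eq_count => v /=.
  rewrite -{1}(cat_take_drop (size u) w) e; apply/eqP/eqP => [/eqP|->] //.
  by rewrite eqseq_cat // eqxx /= => /eqP.
rewrite mul0n; apply/eqP; rewrite -leqn0 leqNgt -has_count.
by apply/hasP => -[v _ /= /eqP ev]; apply: ne; rewrite -ev take_size_cat.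
Qed.

Lemma count_rcons_map (p : ncpoly) (w : word) (z y : letter) :
  count_mem (rcons w z) (map (cat^~ [:: y]) p) = (z == y) * count_mem w p.
Proof.
elim: p => [|u p IH] /=; first by rewrite muln0.
by rewrite IH cats1 eqseq_rcons mulnDr [y == z]eq_sym; case: (z == y); case: (u == w).
Qed.

Lemma count_nil_map_r (p : ncpoly) (y : letter) :
  count_mem [::] (map (cat^~ [:: y]) p) = 0.
Proof. by elim: p => //= u p ->; case: u. Qed.

Lemma sum_take_eq (w u : word) (F : nat -> nat) :
  \sum_(i < (size w).+1) (take i w == u) * F i = (take (size u) w == u) * F (size u).
Proof.
case: (leqP (size u) (size w)) => hs.
  rewrite (bigD1 (Ordinal (n:=(size w).+1) (m:=size u) hs)) //= big1 ?addn0 //.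
  move=> -[i hi] /eqP ni.
  case: eqP => // e; case: ni; apply: val_inj => /=.
  by rewrite -e size_takel //; lia.
rewrite big1 => [|[i hi] _]; case: eqP => // e; move: hs; rewrite -e size_take.
  by case: ifP; lia.
by rewrite /=; case: ifP; lia.
Qed.

Lemma count_pmul (w : word) (p q : ncpoly) : count_mem w (pmul p q) =
  \sum_(i < (size w).+1) count_mem (take i w) p * count_mem (drop i w) q.
Proof.
elim: p => [|u p IH]; first by rewrite big1 // => i _; rewrite mul0n.
rewrite /pmul /= count_cat -/(pmul p q) IH count_map_cat.
rewrite -(sum_take_eq w u (fun i => count_mem (drop i w) q)) -big_split /=.
by apply: eq_bigr => i _; rewrite mulnDl eq_sym.
Qed.

Lemma count_pmul_a (w : word) (p q : ncpoly) :
  count_mem w (pmul (pmul p (mono [:: La])) q) =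
  \sum_(j < size w)
    (nth Lx w j == La) * count_mem (take j w) p * count_mem (drop j.+1 w) q.
Proof.
rewrite count_pmul big_ord_recl /= pmul_mono_r take0 count_nil_map_r mul0n add0n.
apply: eq_bigr => -[j hj] _ /=.
by rewrite /bump /= add1n (take_nth Lx hj) count_rcons_map.
Qed.

Definition admissible (w : word) : bool :=
  [&& xc w == yc w, below_diag w & no_ab w].

Lemma walk_iE n w : walk_i n w = admissible w && (xc w == n.-1).
Proof.
rewrite /walk_i -/(below_diag w) /admissible; case: (pos w) => x y /=.
rewrite xpair_eqE; case: (x =P n.-1) => [->|nx]; case: (y =P n.-1) => [->|ny];
  rewrite ?eqxx ?andbF ?andbT //=.
by case: eqP => // e; case: ny.
Qed.

Lemma admissible_nil_xc w : admissible w -> xc w = 0 -> w = [::].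
Proof.
case/and3P => /eqP e _ _ h; have := size_le_xc_yc w.
by rewrite -e h; case: w {e h}.
Qed.

Lemma admissible_rcons_a w : admissible (rcons w La) = false.
Proof.
rewrite /admissible below_diag_rcons xc_rcons yc_rcons /=.
case: eqP => //= e; case h: (below_diag w) => //=; have := below_diag_end h; lia.
Qed.

Lemma admissible_rcons_x w : admissible (rcons w Lx) = admissible w.
Proof.
rewrite /admissible below_diag_rcons xc_rcons yc_rcons -cats1 no_ab_cat /=.
rewrite eqn_add2r leq_add2r andbF /= andbT.
case: eqP => //= e; case h: (below_diag w) => //=; have := below_diag_end h; lia.
Qed.

(* Position j is a last return of w to the diagonal before a final vertical
   step: w = U a V with U, V admissible and V nonempty, so that w b is
   the first-return decomposition U (a V b) of an admissible walk. *)
Definition last_return (w : word) (j : nat) : bool :=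
  [&& nth Lx w j == La, admissible (take j w),
      admissible (drop j.+1 w) & 0 < xc (drop j.+1 w)].

Lemma split_at_a w j : j < size w -> nth Lx w j = La ->
  w = take j w ++ La :: drop j.+1 w.
Proof. by move=> hj <-; rewrite -(drop_nth Lx hj) cat_take_drop. Qed.

Lemma no_ab_wrap V : 0 < xc V -> admissible V -> no_ab (La :: rcons V Lb).
Proof.
case: V => [|v0 V] // _ /and3P [/eqP hb hok hab].
rewrite no_ab_cons -cats1 no_ab_cat hab /= andbT.
by rewrite (negbTE (below_diag_head hok)) (negbTE (below_diag_last hok hb)).
Qed.

(* Appending an arch a V b to an admissible walk U stays below the
   diagonal: the arch starts with a step away from it. *)
Lemma below_diag_wrap U V : admissible U -> below_diag V -> xc V = yc V ->
  below_diag (U ++ La :: rcons V Lb).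
Proof.
move=> /and3P [/eqP hU okU _] okV hV; apply/below_diag_catP; split => // -[|k].
  by rewrite /=; lia.
rewrite /= -cats1 take_cat; case: ifP => hk.
  by move/below_diagP: okV => /(_ k); lia.
by rewrite xc_cat yc_cat; case: (k - size V) => [|m] /=; lia.
Qed.

Lemma last_return_sound w j : j < size w -> last_return w j ->
  admissible (rcons w Lb).
Proof.
move=> hj /and4P [/eqP ha hU hV hA]; rewrite (split_at_a hj ha) rcons_cat rcons_cons.
move: (hU) (hV) => /and3P [/eqP eU okU abU] /and3P [/eqP eV okV abV].
rewrite /admissible below_diag_wrap // no_ab_cat abU no_ab_wrap //= andbF andbT.
by rewrite xc_cat yc_cat /= xc_rcons yc_rcons /=; apply/eqP; lia.
Qed.

Lemma last_return_strict w j k : j < size w -> last_return w j ->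
  j < k -> k <= size w -> yc (take k w) < xc (take k w).
Proof.
move=> hj /and4P [/eqP ha hU /and3P [_ okV _] _] hjk hk.
have hs : size (take j w) = j by rewrite size_takel // ltnW.
move: (hU) => /and3P [/eqP eU _ _].
have hkj : (k < j) = false by apply/negbTE; rewrite -leqNgt ltnW.
rewrite (split_at_a hj ha) take_cat hs hkj -(subnSK hjk) /= xc_cat yc_cat /=.
move/below_diagP: okV => /(_ (k - j.+1)); lia.
Qed.

Lemma last_touch w : below_diag w -> xc w != yc w -> exists2 j, j < size w &
  xc (take j w) = yc (take j w) /\
  forall k, j < k -> k <= size w -> yc (take k w) < xc (take k w).
Proof.
move=> okw hne; pose P j := (j <= size w) && (xc (take j w) == yc (take j w)).
have [|i /andP [] //|j /andP [hjs /eqP hb] hmax] := @ex_maxnP P (size w).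
  by exists 0; rewrite /P take0.
exists j; last split => // k hjk hk.
  rewrite ltn_neqAle hjs andbT; apply: contraNneq hne => ej.
  by move: hb; rewrite ej take_size => ->.
rewrite ltn_neqAle; move/below_diagP: okw => /(_ k) ->; rewrite andbT.
by apply/negP => /eqP ek; have := hmax k; rewrite /P hk ek eqxx => /(_ isT); lia.
Qed.

(* Conversely, an admissible walk w b splits at the last point where w
   touches the diagonal: that step must be a, and both sides are admissible. *)
Lemma last_return_exists w : admissible (rcons w Lb) ->
  exists2 j, j < size w & last_return w j.
Proof.
rewrite /admissible below_diag_rcons xc_rcons yc_rcons -cats1 no_ab_cat /= !addn0.
rewrite eqxx andbT => /and4P [/eqP hbal /andP [okw _] abw hlast].
have [|j hj [hb hstrict]] := last_touch okw; first by apply/eqP; lia.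
have ha : nth Lx w j = La.
  have := hstrict j.+1 (ltnSn _) hj; rewrite (take_nth Lx hj) xc_rcons yc_rcons hb.
  by case: (nth Lx w j) => //=; lia.
have ew := split_at_a hj ha; set U := take j w in hb ew *; set V := drop j.+1 w in ew *.
have hxw : xc w = xc U + 1 + xc V by rewrite {1}ew xc_cat /=; lia.
have hyw : yc w = yc U + yc V by rewrite {1}ew yc_cat.
have hV : xc V = yc V by lia.
have okU : below_diag U by move: okw; rewrite {1}ew => /below_diag_catP [].
have okV : below_diag V.
  apply/below_diagP => k; case: (ltnP k (size V)) => hk; last first.
    by rewrite take_oversize // hV.
  have := hstrict (j.+1 + k) (leq_addr _ _); rewrite size_drop in hk.
  rewrite takeD (take_nth Lx hj) ha -cats1 !xc_cat !yc_cat /= -/U -/V hb; lia.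
have [abU abV] : no_ab U /\ no_ab V.
  by move: abw; rewrite {1}ew no_ab_cat no_ab_cons => /and3P [-> /andP [_ ->]].
have nV : V != [::].
  by apply: contraNneq hlast => eV; rewrite {1}ew eV last_cat.
exists j => //; rewrite /last_return ha /admissible okU okV abU abV hb hV !eqxx /=.
have hs : 0 < size V by rewrite lt0n size_eq0.
by have := size_le_xc_yc V; lia.
Qed.

Lemma sum_bool_unique n (F : 'I_n -> bool) :
  (forall i j, F i -> F j -> i = j) -> \sum_(i < n) F i = [exists i, F i].
Proof.
move=> U; case: existsP => [[i Fi]|nF].
  rewrite (bigD1 i) // big1 ?Fi // => j /= nj.
  by case: (boolP (F j)) => // Fj; case/eqP: nj; apply: U.
by rewrite big1 // => j _; case: (boolP (F j)) => // Fj; case: nF; exists j.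
Qed.

Lemma admissible_rcons_b w :
  admissible (rcons w Lb) = \sum_(j < size w) last_return w j :> nat.
Proof.
rewrite sum_bool_unique.
  congr nat_of_bool; apply/idP/existsP => [/last_return_exists [j hj hr]|[j]].
    by exists (Ordinal hj).
  exact: last_return_sound.
have key (i j : 'I_(size w)) : i < j -> last_return w i -> last_return w j -> False.
  move=> hij hi /and4P [_ /and3P [/eqP hj _ _] _ _].
  by have := last_return_strict (ltn_ord i) hi hij (ltnW (ltn_ord j)); lia.
move=> i j hi hj; case: (ltngtP i j) => h; last exact: val_inj.
  by case: (key _ _ h hi hj).
by case: (key _ _ h hj hi).
Qed.

Lemma coef_d_rec_nil d n : coef (d_rec d n) [::] = 0.
Proof.
rewrite /coef /d_rec /padd count_cat pmul_mono_r count_nil_map_r count_flatten.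
by rewrite sumnE !big_map big1 // => k _; rewrite pmul_mono_r count_nil_map_r.
Qed.

Lemma coef_d_rec_rcons d n w z : coef (d_rec d n) (rcons w z) =
  (z == Lx) * coef (d n.-1) w +
  (z == Lb) * \sum_(k <- iota 2 (n - 2)) \sum_(j < size w)
    (nth Lx w j == La) * coef (d (n - k)) (take j w) * coef (d k) (drop j.+1 w).
Proof.
rewrite /coef /d_rec /padd count_cat pmul_mono_r count_rcons_map count_flatten.
rewrite sumnE !big_map big_distrr; congr (_ + _); apply: eq_bigr => k _.
by rewrite pmul_mono_r count_rcons_map count_pmul_a.
Qed.

Lemma sum_seq_indicator (s : seq nat) c X :
  \sum_(k <- s) ((k == c) * X) = count_mem c s * X.
Proof.
elim: s => [|k s IH]; first by rewrite big_nil.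
by rewrite big_cons IH /= mulnDl eq_sym.
Qed.

Lemma sum_split_index n a b : 2 <= n ->
  \sum_(k <- iota 2 (n - 2)) ((a == (n - k).-1) * (b == k.-1)) =
  (a + b + 2 == n) && (0 < b).
Proof.
move=> hn; rewrite (eq_big_seq (fun k => (k == b.+1) * (a + b + 2 == n))); last first.
  move=> k; rewrite mem_iota => /andP [h1 h2].
  by do 4 (case: eqP => ?) => //=; lia.
rewrite sum_seq_indicator count_uniq_mem ?iota_uniq // mem_iota.
by case: (_ =P n) => [e|ne]; case: (ltnP 0 b) => hb //=; rewrite ?muln0 ?muln1; lia.
Qed.

Lemma last_return_weight n w (j : 'I_(size w)) : 2 <= n ->
  \sum_(k <- iota 2 (n - 2)) (nth Lx w j == La) *
     (admissible (take j w) && (xc (take j w) == (n - k).-1)) *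
     (admissible (drop j.+1 w) && (xc (drop j.+1 w) == k.-1))
  = last_return w j * (xc w == n.-1).
Proof.
move=> hn; set U := take j w; set V := drop j.+1 w.
rewrite (eq_bigr (fun k => [&& nth Lx w j == La, admissible U & admissible V] *
    ((xc U == (n - k).-1) * (xc V == k.-1)))); last first.
  by move=> k _; case: (_ == La); case: (admissible U); case: (admissible V);
    rewrite /= ?mul0n ?muln0 ?mul1n ?muln1.
rewrite -big_distrr /= sum_split_index // /last_return -/U -/V.
case ha: (nth Lx w j == La) => //=.
have hx : xc w = xc U + 1 + xc V.
  by rewrite {1}(split_at_a (ltn_ord j) (eqP ha)) xc_cat /= -/U -/V; lia.
case: (admissible U); case: (admissible V) => //=.
by case: ltnP => hV; rewrite ?andbF ?andbT //=; do 2 case: eqP => //=; lia.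
Qed.

(* The walks of part (ii) are exactly the words a v b with v admissible:
   the strict condition after the first step is the weak one for v. *)
Lemma strict_below_shift l v z :
  all (fun k => yc (take k (l :: rcons v z)) < xc (take k (l :: rcons v z)))
      (iota 1 (size (l :: rcons v z)).-1) =
  all (fun m => (step l).2 + yc (take m v) < (step l).1 + xc (take m v))
      (iota 0 (size v).+1).
Proof.
rewrite /= size_rcons -(addn0 1) iotaDl all_map; apply: eq_in_all => m.
by rewrite mem_iota /= => hm; rewrite -cats1 takel_cat //; lia.
Qed.

Lemma walk_iiE n l v z : 2 <= n ->
  walk_ii n (l :: rcons v z) = [&& z == Lb, l == La, admissible v & xc v == n.-1].
Proof.
move=> hn; rewrite /walk_ii strict_below_shift.
case: l; [|by rewrite /= take0 /= !andbF..].
rewrite (eq_all (a2 := fun k => yc (take k v) <= xc (take k v))); last first.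
  by move=> m /=; rewrite add0n add1n ltnS.
rewrite -/(below_diag v) -cats1 no_ab_cons no_ab_cat /= xc_cat yc_cat /= xpair_eqE.
rewrite /admissible; case: (boolP (below_diag v)) => hok; last by rewrite !andbF.
have hle := below_diag_end hok.
case: z => /=; rewrite ?andbF;
  [by do 2 (case: eqP => //= ?); lia| |by do 2 (case: eqP => //= ?); lia].
rewrite eqxx andbT.
have -> : (1 + (xc v + (0 + 0)) == n) && (0 + (yc v + (1 + 0)) == n) =
    (xc v == yc v) && (xc v == n.-1).
  by apply/andP/andP => -[/eqP ? /eqP ?]; split; apply/eqP; lia.
case: (xc v =P yc v) => hAB /=; last by rewrite ?andbF.
case: (xc v =P n.-1) => hA /=; last by rewrite ?andbF.
have hne : v != [::] by case: v hok hle hA hAB => //=; lia.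
rewrite (_ : head Lx (v ++ [:: Lb]) = head Lx v); last by case: v hne {hok hle hA hAB}.
by rewrite below_diag_head // andbT (negbTE (below_diag_last hok hAB)) andbT.
Qed.

(* The ballot table: ballot 0 r = 1, ballot m.+1 0 = 0 and
   ballot m.+1 r.+1 = ballot m.+1 r + ballot m r.+2.  Its column r = 1 is
   the Catalan sequence (catalan_rec, catalan_closed). *)
Fixpoint ballot (m : nat) : nat -> nat :=
  match m with
  | 0 => fun _ => 1
  | m'.+1 => fix row r := if r is r'.+1 then row r' + ballot m' r'.+2 else 0
  end.

Lemma ballot0 r : ballot 0 r = 1.
Proof. by []. Qed.

Lemma ballotS m r : ballot m.+1 r.+1 = ballot m.+1 r + ballot m r.+2.
Proof. by []. Qed.

Lemma ballot_closed m s :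
  ballot m.+1 s.+1 + 'C(m.*2 + 2 + s, m) = 'C(m.*2 + 2 + s, m.+1).
Proof.
elim: m s => [|m IHm] s.
  by rewrite bin0 bin1; elim: s => [|s IH] //; rewrite ballotS ballot0; lia.
elim: s => [|s IHs].
  rewrite ballotS add0n; have := IHm 1.
  rewrite (_ : m.+1.*2 + 2 + 0 = (m.*2 + 3).+1); last by lia.
  rewrite (_ : m.*2 + 2 + 1 = m.*2 + 3) ?binS; last by lia.
  suff -> : 'C(m.*2 + 3, m.+2) = 'C(m.*2 + 3, m.+1) by lia.
  by rewrite -bin_sub; [congr binomial|]; lia.
rewrite ballotS; have := IHm s.+2.
rewrite (_ : m.+1.*2 + 2 + s.+1 = (m.*2 + 4 + s).+1); last by lia.
rewrite (_ : m.*2 + 2 + s.+2 = m.*2 + 4 + s); last by lia.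
rewrite (_ : m.+1.*2 + 2 + s = m.*2 + 4 + s) in IHs; last by lia.
by rewrite !binS; lia.
Qed.

Lemma ballot_conv m r s :
  ballot m (r + s) = \sum_(j < m.+1) ballot j r * ballot (m - j) s.
Proof.
have [n] := ubnP (m.*2 + r); elim: n => // n IH in m r s *; rewrite ltnS => hmr.
case: r hmr => [|r] hmr.
  by rewrite big_ord_recl /= mul1n subn0 big1 ?addn0 // => j _.
case: m hmr => [|m] hmr; first by rewrite big_ord1.
rewrite addSn ballotS IH; last by lia.
rewrite -addSn -addSn (IH m r.+2); last by lia.
rewrite big_ord_recl [in RHS]big_ord_recl !ballot0 !mul1n !subn0 -addnA.
congr (_ + _); rewrite -big_split; apply: eq_bigr => j _.
by rewrite lift0 ballotS subSS mulnDl.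
Qed.

Lemma catalan_rec m : ballot m.+1 1 = \sum_(j < m.+1) ballot j 1 * ballot (m - j) 1.
Proof. by rewrite ballotS add0n -ballot_conv. Qed.

Lemma catalan_closed m : ballot m 1 = 'C(m.*2, m) %/ m.+1.
Proof.
case: m => [|k]; first by rewrite bin0 divn1.
have h1 := ballot_closed k 0; have h2 := mul_bin_left (k.+1.*2) k.
rewrite addn0 in h1.
rewrite (_ : k.+1.*2 = k.*2 + 2) in h2 *; last by lia.
rewrite (_ : k.*2 + 2 - k = k.+2) in h2; last by lia.
move: h1 h2; set c := 'C(_, k.+1); set e := 'C(_, k) => h1 h2.
have -> : c = ballot k.+1 1 * k.+2 by nia.
by rewrite mulnK.
Qed.

Lemma peq_size (p q : ncpoly) : peq p q -> size p = size q.
Proof. by move=> h; apply: perm_size; apply/allP => x _ /=; apply/eqP; exact: h. Qed.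

Lemma sum_iota a n (F : nat -> nat) :
  \sum_(k <- iota a n) F k = \sum_(j < n) F (a + j).
Proof.
elim: n a => [|n IH] a; first by rewrite big_nil big_ord0.
rewrite big_cons big_ord_recl addn0 IH; congr (_ + _); apply: eq_bigr => j _.
by rewrite lift0 addnS addSn.
Qed.

Lemma size_d_rec d n : size (d_rec d n) =
  size (d n.-1) + \sum_(k <- iota 2 (n - 2)) size (d (n - k)) * size (d k).
Proof.
rewrite /d_rec /padd size_cat size_allpairs /mono /= muln1 size_flatten /shape.
rewrite sumnE !big_map; congr (_ + _); apply: eq_bigr => k _.
by rewrite !size_allpairs /= !muln1.
Qed.

Lemma nmonos_simple p : (forall w, coef p w <= 1) -> nmonos p = size p.
Proof.
move=> h1; rewrite /nmonos undup_id //; apply: count_mem_uniq => x.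
have := h1 x; rewrite /coef; have := has_count (pred1 x) p; rewrite has_pred1 => ->.
by case: (count_mem x p) => [|[|]].
Qed.

Section Recurrence.

Variable d : nat -> ncpoly.
Hypothesis d1 : peq (d 1) (mono [::]).
Hypothesis drec : forall n, 2 <= n -> peq (d n) (d_rec d n).

Lemma coef_d n : 0 < n -> forall w, coef (d n) w = admissible w && (xc w == n.-1).
Proof.
elim/ltn_ind: n => n IH hn w; case: (leqP n 1) => hn2.
  have -> : n = 1 by lia.
  rewrite d1 /coef /=; case: w => [|l w] //=.
  case hw: (admissible _) => //=; case: eqP => // h0.
  by have := admissible_nil_xc hw h0.
rewrite drec //; case/lastP: w => [|w z].
  by rewrite coef_d_rec_nil /=; case: eqP => //; lia.
rewrite coef_d_rec_rcons xc_rcons IH; [|lia|lia]; case: z.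
- by rewrite admissible_rcons_a.
- rewrite -[in RHS]mulnb admissible_rcons_b eqxx mul1n.
  rewrite (_ : (Lb == Lx) = false) // mul0n add0n addn0.
  rewrite (eq_big_seq (fun k => \sum_(j < size w) (nth Lx w j == La) *
     (admissible (take j w) && (xc (take j w) == (n - k).-1)) *
     (admissible (drop j.+1 w) && (xc (drop j.+1 w) == k.-1)))); last first.
    by move=> k; rewrite mem_iota => hk; apply: eq_bigr => j _; rewrite !IH //; lia.
  rewrite exchange_big /= big_distrl /=; apply: eq_bigr => j _.
  exact: last_return_weight.
rewrite admissible_rcons_x eqxx mul1n (_ : (Lx == Lb) = false) // mul0n addn0 /=.
by case: (admissible w); do 2 case: eqP => //=; lia.
Qed.

Lemma coef_wrapped n : 2 <= n -> forall w,
  coef (pmul (pmul (mono [:: La]) (d n)) (mono [:: Lb])) w = walk_ii n w.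
Proof.
move=> hn w; rewrite /coef pmul_mono_l pmul_mono_r.
case/lastP: w => [|w z].
  by rewrite count_nil_map_r /walk_ii /= xpair_eqE; case: eqP => //; lia.
rewrite count_rcons_map count_map_cat; case: w => [|l v] /=.
  by rewrite muln0 /walk_ii /=; case: z => /=; rewrite xpair_eqE; case: eqP => //=; lia.
rewrite -/(coef _ _) coef_d; last by lia.
rewrite take0 drop0 eqseq_cons andbT walk_iiE //.
by case: (z == Lb); case: (l == La); case: (admissible v); case: (_ == _).
Qed.

Lemma size_d m : size (d m.+1) = ballot m 1.
Proof.
elim/ltn_ind: m => -[_|m IH]; first by rewrite (peq_size d1).
rewrite (peq_size (drec _)) // size_d_rec catalan_rec big_ord_recl ballot0 mul1n.
rewrite subn0 IH // subSS subSS subn0 sum_iota; congr (_ + _).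
apply: eq_bigr => -[j hj] _ /=; rewrite mulnC.
rewrite (_ : m.+2 - (2 + j) = (m - j.+1).+1); last by lia.
by rewrite !IH //; lia.
Qed.

End Recurrence.

Theorem mainTheorem4 (d : nat -> ncpoly)
  (d1 : peq (d 1) (mono [::]))
  (drec : forall n, 2 <= n -> peq (d n) (d_rec d n)) :
  forall n, 1 <= n ->
    (* (i) *)
    (forall w, coef (d n) w = walksum_coef (walk_i n) w) /\
    (* (ii) *)
    (2 <= n -> forall w,
       coef (pmul (pmul (mono [:: La]) (d n)) (mono [:: Lb])) w
       = walksum_coef (walk_ii n) w) /\
    (* (iii) *)
    ((forall w, coef (d n) w <= 1) /\
     nmonos (d n) = 'C((n.-1).*2, n.-1) %/ n).
Proof.
move=> n hn.
have part_i w : coef (d n) w = walk_i n w by rewrite walk_iE (coef_d d1 drec).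
have simple w : coef (d n) w <= 1 by rewrite part_i leq_b1.
split=> [w|]; first exact: part_i.
split=> [hn2 w|]; first exact: (coef_wrapped d1 drec hn2).
split=> //; rewrite nmonos_simple //.
by case: n hn {part_i simple} => // m _; rewrite (size_d d1 drec) catalan_closed.
Qed.
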